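(* Let $\mathcal A$ be an abelian category and $\mathcal T\subseteq\mathcal A$ a full subcategory consisting of objects which are both projective and injective, closed under finite direct sums and direct summands. Then the stable category $\underline{\mathcal A}=\mathcal A/\langle\mathcal T\rangle$ is balanced.
   Context: $\underline{\mathcal A}$ has the same objects as $\mathcal A$ and morphisms modulo those factoring through an object of $\mathcal T$. A category is balanced if every morphism that is both a monomorphism and an epimorphism is an isomorphism. *)

From HB Require Import structures.
From mathcomp Require Import all_boot all_algebra.
Set Implicit Arguments. Unset Strict Implicit. Unset Printing Implicit Defensive.
Import GRing.Theory.
Local Open Scope ring_scope.

Record precat := PreCat {
  Obj : Type;
  Hom : Obj -> Obj -> zmodType;
  idm : forall A : Obj, Hom A A;
  comp : forall A B C : Obj, Hom B C -> Hom A B -> Hom A C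
}.
Arguments idm {p} A.
Arguments comp {p A B C} g f.

Section Defs.
Variable C : precat.
Local Notation Obj := (Obj C).
Local Notation Hom := (@Hom C).
Local Notation "g \oc f" := (comp g f) (at level 40, left associativity).

Definition is_preadditive : Prop :=
  [/\ forall (A B : Obj) (f : Hom A B), idm B \oc f = f,
      forall (A B : Obj) (f : Hom A B), f \oc idm A = f,
      forall (A B D E : Obj) (h : Hom D E) (g : Hom B D) (f : Hom A B),
        h \oc (g \oc f) = (h \oc g) \oc f,
      forall (A B D : Obj) (g g' : Hom B D) (f : Hom A B),
        (g + g') \oc f = g \oc f + g' \oc f
    & forall (A B D : Obj) (g : Hom B D) (f f' : Hom A B),
        g \oc (f + f') = g \oc f + g \oc f'].

Definition is_zero_obj (Z : Obj) : Prop :=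
  forall A : Obj, (forall f : Hom A Z, f = 0) /\ (forall g : Hom Z A, g = 0).

Definition is_biproduct (S A B : Obj) (i1 : Hom A S) (i2 : Hom B S)
    (p1 : Hom S A) (p2 : Hom S B) : Prop :=
  [/\ p1 \oc i1 = idm A, p2 \oc i2 = idm B, p1 \oc i2 = 0, p2 \oc i1 = 0
    & i1 \oc p1 + i2 \oc p2 = idm S].

Definition is_kernel (A B K : Obj) (f : Hom A B) (k : Hom K A) : Prop :=
  f \oc k = 0 /\
  forall (X : Obj) (g : Hom X A), f \oc g = 0 ->
    exists u : Hom X K, k \oc u = g /\ forall u' : Hom X K, k \oc u' = g -> u' = u.

Definition is_cokernel (A B Q : Obj) (f : Hom A B) (q : Hom B Q) : Prop :=
  q \oc f = 0 /\
  forall (X : Obj) (g : Hom B X), g \oc f = 0 ->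
    exists u : Hom Q X, u \oc q = g /\ forall u' : Hom Q X, u' \oc q = g -> u' = u.

Definition is_mono (A B : Obj) (f : Hom A B) : Prop :=
  forall (X : Obj) (g h : Hom X A), f \oc g = f \oc h -> g = h.

Definition is_epi (A B : Obj) (f : Hom A B) : Prop :=
  forall (X : Obj) (g h : Hom B X), g \oc f = h \oc f -> g = h.

Definition is_abelian : Prop :=
  is_preadditive /\
  (exists Z : Obj, is_zero_obj Z) /\
  (forall A B : Obj, exists (S : Obj) (i1 : Hom A S) (i2 : Hom B S)
      (p1 : Hom S A) (p2 : Hom S B), is_biproduct i1 i2 p1 p2) /\
  (forall (A B : Obj) (f : Hom A B), exists (K : Obj) (k : Hom K A), is_kernel f k) /\
  (forall (A B : Obj) (f : Hom A B), exists (Q : Obj) (q : Hom B Q), is_cokernel f q) /\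
  (forall (A B : Obj) (f : Hom A B), is_mono f ->
      exists (Q : Obj) (g : Hom B Q), is_kernel g f) /\
  (forall (A B : Obj) (f : Hom A B), is_epi f ->
      exists (K : Obj) (g : Hom K A), is_cokernel g f).

Definition is_projective (P : Obj) : Prop :=
  forall (A B : Obj) (e : Hom A B), is_epi e ->
    forall f : Hom P B, exists g : Hom P A, e \oc g = f.

Definition is_injective (I : Obj) : Prop :=
  forall (A B : Obj) (m : Hom A B), is_mono m ->
    forall f : Hom A I, exists g : Hom B I, g \oc m = f.

(* The full subcategory T is given by a predicate on objects. *)
Variable T : Obj -> Prop.

Definition closed_under_direct_sums : Prop :=
  forall (S A B : Obj) (i1 : Hom A S) (i2 : Hom B S) (p1 : Hom S A) (p2 : Hom S B),
    is_biproduct i1 i2 p1 p2 -> T A -> T B -> T S.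

Definition closed_under_direct_summands : Prop :=
  forall (S A B : Obj) (i1 : Hom A S) (i2 : Hom B S) (p1 : Hom S A) (p2 : Hom S B),
    is_biproduct i1 i2 p1 p2 -> T S -> T A /\ T B.

Definition factors_through_T (A B : Obj) (f : Hom A B) : Prop :=
  exists (X : Obj) (u : Hom A X) (v : Hom X B), T X /\ f = v \oc u.

Inductive in_ideal_T (A B : Obj) : Hom A B -> Prop :=
  | ideal0 : in_ideal_T 0
  | ideal_fact (f : Hom A B) : factors_through_T f -> in_ideal_T f
  | idealD (f g : Hom A B) : in_ideal_T f -> in_ideal_T g -> in_ideal_T (f + g).

(* Equality of morphisms in the stable category A/<T>. *)
Definition st_eq (A B : Obj) (f g : Hom A B) : Prop := in_ideal_T (f - g).

(* Monos, epis and isos in the stable category (morphisms = classes mod <T>,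
   composition of classes = class of the composite). *)
Definition st_mono (A B : Obj) (f : Hom A B) : Prop :=
  forall (X : Obj) (g h : Hom X A), st_eq (f \oc g) (f \oc h) -> st_eq g h.

Definition st_epi (A B : Obj) (f : Hom A B) : Prop :=
  forall (X : Obj) (g h : Hom B X), st_eq (g \oc f) (h \oc f) -> st_eq g h.

Definition st_iso (A B : Obj) (f : Hom A B) : Prop :=
  exists g : Hom B A, st_eq (g \oc f) (idm A) /\ st_eq (f \oc g) (idm B).

Definition stable_balanced : Prop :=
  forall (A B : Obj) (f : Hom A B), st_mono f -> st_epi f -> st_iso f.

End Defs.

(* Let f be mono and epi in the stable category, with kernel k.  Since f k = 0, k lies in
   the ideal, so either k = 0 or k factors as v u through an object X of T.  In the latter
   case, extending the mono u along k by injectivity of X gives w with w k = u, and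
   g = (f, w) : A -> B (+) X is a genuine monomorphism with f = p1 g (if k = 0 take g = f).
   Stable epimorphy of f puts the cokernel q of g into the ideal; since q then factors
   through a projective object, q (1 - s) = 0 for some s in the ideal, so 1 - s factors
   through g = ker q, giving a stable right inverse h of g.  Then h i1 is a stable right
   inverse of f, and stable monomorphy makes it two-sided. *)
From Pilot Require Import Defs.
From mathcomp Require Import all_boot all_algebra.
Set Implicit Arguments. Unset Strict Implicit. Unset Printing Implicit Defensive.
Import GRing.Theory.
Local Open Scope ring_scope.

Local Notation "g \oc f" := (Defs.comp g f) (at level 40, left associativity).

Section Preadditive.
Variable C : precat.
Hypothesis preC : is_preadditive C.
Local Notation Obj := (Defs.Obj C).
Local Notation Hom := (@Defs.Hom C).

Lemma comp1o (A B : Obj) (f : Hom A B) : idm B \oc f = f.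
Proof. by case: preC. Qed.

Lemma compo1 (A B : Obj) (f : Hom A B) : f \oc idm A = f.
Proof. by case: preC. Qed.

Lemma compoA (A B D E : Obj) (h : Hom D E) (g : Hom B D) (f : Hom A B) :
  h \oc (g \oc f) = h \oc g \oc f.
Proof. by case: preC. Qed.

Lemma compoDl (A B D : Obj) (g g' : Hom B D) (f : Hom A B) :
  (g + g') \oc f = g \oc f + g' \oc f.
Proof. by case: preC. Qed.

Lemma compoDr (A B D : Obj) (g : Hom B D) (f f' : Hom A B) :
  g \oc (f + f') = g \oc f + g \oc f'.
Proof. by case: preC. Qed.

Lemma compo0 (A B D : Obj) (g : Hom B D) : g \oc (0 : Hom A B) = 0.
Proof. by apply: (addrI (g \oc 0)); rewrite -compoDr !addr0. Qed.

Lemma comp0o (A B D : Obj) (f : Hom A B) : (0 : Hom B D) \oc f = 0.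
Proof. by apply: (addrI (0 \oc f)); rewrite -compoDl !addr0. Qed.

Lemma compoN (A B D : Obj) (g : Hom B D) (f : Hom A B) : g \oc (- f) = - (g \oc f).
Proof. by apply/eqP; rewrite -addr_eq0 addrC -compoDr subrr compo0. Qed.

Lemma compNo (A B D : Obj) (g : Hom B D) (f : Hom A B) : (- g) \oc f = - (g \oc f).
Proof. by apply/eqP; rewrite -addr_eq0 addrC -compoDl subrr comp0o. Qed.

Lemma compoBr (A B D : Obj) (g : Hom B D) (f f' : Hom A B) :
  g \oc (f - f') = g \oc f - g \oc f'.
Proof. by rewrite compoDr compoN. Qed.

Lemma compoBl (A B D : Obj) (g g' : Hom B D) (f : Hom A B) :
  (g - g') \oc f = g \oc f - g' \oc f.
Proof. by rewrite compoDl compNo. Qed.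

Lemma mono_of_comp0 (A B : Obj) (f : Hom A B) :
  (forall (X : Obj) (a : Hom X A), f \oc a = 0 -> a = 0) -> is_mono f.
Proof.
move=> f0 X a b fab; apply/eqP; rewrite -subr_eq0; apply/eqP.
by apply: f0; rewrite compoBr fab subrr.
Qed.

Lemma monoSr (A B D : Obj) (g : Hom B D) (f : Hom A B) :
  is_mono (g \oc f) -> is_mono f.
Proof. by move=> gfm X a b fab; apply: gfm; rewrite -!compoA fab. Qed.

Lemma kernel_mono (A B K : Obj) (f : Hom A B) (k : Hom K A) :
  is_kernel f k -> is_mono k.
Proof.
move=> [fk kP] X a b kab.
have /kP [u [_ uP]] : f \oc (k \oc a) = 0 by rewrite compoA fk comp0o.
by rewrite (uP a) // (uP b).
Qed.

Lemma cokernel_epi (A B Q : Obj) (f : Hom A B) (q : Hom B Q) :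
  is_cokernel f q -> is_epi q.
Proof.
move=> [qf qP] X a b abq.
have /qP [u [_ uP]] : a \oc q \oc f = 0 by rewrite -compoA qf compo0.
by rewrite (uP a) // (uP b).
Qed.

Lemma biproduct_decomp (S A B D : Obj) (i1 : Hom A S) (i2 : Hom B S)
    (p1 : Hom S A) (p2 : Hom S B) (q : Hom S D) :
  is_biproduct i1 i2 p1 p2 -> q = q \oc i1 \oc p1 + q \oc i2 \oc p2.
Proof. by case=> _ _ _ _ e; rewrite -!compoA -compoDr e compo1. Qed.

(* A mono is the kernel of its cokernel. *)
Lemma mono_cokernel_factor (A S Q : Obj) (g : Hom A S) (q : Hom S Q) :
  (forall (A B : Obj) (f : Hom A B), is_mono f ->
     exists (Q : Obj) (g : Hom B Q), is_kernel g f) ->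
  is_mono g -> is_cokernel g q ->
  forall (X : Obj) (x : Hom X S), q \oc x = 0 -> exists y : Hom X A, g \oc y = x.
Proof.
move=> monoK gm [qg qP] X x qx.
have [Q' [g' [g'g g'P]]] := monoK _ _ g gm.
have [u [uq _]] := qP _ g' g'g.
have /g'P [y [gy _]] : g' \oc x = 0 by rewrite -uq -compoA qx compo0.
by exists y.
Qed.

Section Ideal.
Variable T : Obj -> Prop.
Local Notation ideal := (in_ideal_T T).

Lemma in_ideal_compl (A B D : Obj) (g : Hom B D) (f : Hom A B) :
  ideal f -> ideal (g \oc f).
Proof.
elim=> [|_ [X [u [v [TX ->]]]]|f1 f2 _ IH1 _ IH2].
- by rewrite compo0; apply: ideal0.
- by apply: ideal_fact; exists X, u, (g \oc v); rewrite compoA.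
- by rewrite compoDr; apply: idealD.
Qed.

Lemma in_ideal_compr (A B D : Obj) (g : Hom B D) (f : Hom A B) :
  ideal g -> ideal (g \oc f).
Proof.
elim=> [|_ [X [u [v [TX ->]]]]|g1 g2 _ IH1 _ IH2].
- by rewrite comp0o; apply: ideal0.
- by apply: ideal_fact; exists X, (u \oc f), v; rewrite compoA.
- by rewrite compoDl; apply: idealD.
Qed.

Lemma in_idealN (A B : Obj) (f : Hom A B) : ideal f -> ideal (- f).
Proof.
elim=> [|_ [X [u [v [TX ->]]]]|f1 f2 _ IH1 _ IH2].
- by rewrite oppr0; apply: ideal0.
- by apply: ideal_fact; exists X, u, (- v); rewrite compNo.
- by rewrite opprD; apply: idealD.
Qed.

Lemma in_ideal_factor (A B X : Obj) (u : Hom A X) (v : Hom X B) :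
  T X -> ideal (v \oc u).
Proof. by move=> TX; apply: ideal_fact; exists X, u, v. Qed.

Lemma st_mono_ideal (A B D : Obj) (f : Hom A B) (k : Hom D A) :
  st_mono T f -> ideal (f \oc k) -> ideal k.
Proof. by move=> fm fk; rewrite -[k]subr0; apply: fm; rewrite /st_eq compo0 subr0. Qed.

Lemma st_epi_ideal (A B D : Obj) (f : Hom A B) (q : Hom B D) :
  st_epi T f -> ideal (q \oc f) -> ideal q.
Proof. by move=> fe qf; rewrite -[q]subr0; apply: fe; rewrite /st_eq comp0o subr0. Qed.

Lemma st_iso_of_right_inverse (A B : Obj) (f : Hom A B) (r : Hom B A) :
  st_mono T f -> st_eq T (f \oc r) (idm B) -> st_iso T f.
Proof.
move=> fm fr; exists r; split => //; apply: fm.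
by rewrite /st_eq compo1 compoA -[X in _ - X]comp1o -compoBl; apply: in_ideal_compr.
Qed.

Section Abelian.
Hypothesis biprodC : forall A B : Obj, exists (S : Obj) (i1 : Hom A S) (i2 : Hom B S)
  (p1 : Hom S A) (p2 : Hom S B), is_biproduct i1 i2 p1 p2.
Hypothesis sumT : closed_under_direct_sums T.

(* Sums of maps factoring through T factor through the direct sum of the two objects. *)
Lemma in_ideal_factors (A B : Obj) (f : Hom A B) :
  ideal f -> f = 0 \/ factors_through_T T f.
Proof.
elim=> [|f' ff'|f1 f2 _ [->|F1] _ [->|F2]]; rewrite ?addr0 ?add0r; auto.
right; case: F1 => [X1 [u1 [v1 [T1 ->]]]]; case: F2 => [X2 [u2 [v2 [T2 ->]]]].
have [S [i1 [i2 [p1 [p2 bS]]]]] := biprodC X1 X2.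
exists S, (i1 \oc u1 + i2 \oc u2), (v1 \oc p1 + v2 \oc p2); split.
  exact: sumT bS T1 T2.
case: bS => e1 e2 e3 e4 _.
rewrite compoDr !compoDl -!compoA !(compoA p1) !(compoA p2) e1 e2 e3 e4.
by rewrite !comp0o !compo0 addr0 add0r !comp1o.
Qed.

Hypothesis projT : forall X : Obj, T X -> is_projective X.

(* Write q = v u through Y in T and lift v along the epi q using projectivity of Y. *)
Lemma in_ideal_epi_fix (S Q : Obj) (q : Hom S Q) :
  is_epi q -> ideal q -> exists s : Hom S S, ideal s /\ q \oc s = q.
Proof.
move=> qe /in_ideal_factors [->|[Y [u [v [TY quv]]]]].
  by exists 0; split; [apply: ideal0 | rewrite compo0].
have [w qw] := projT TY qe v.
by exists (w \oc u); split; [apply: in_ideal_factor | rewrite compoA qw quv].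
Qed.

Hypothesis cokerC : forall (A B : Obj) (f : Hom A B),
  exists (Q : Obj) (q : Hom B Q), is_cokernel f q.
Hypothesis monoK : forall (A B : Obj) (f : Hom A B), is_mono f ->
  exists (Q : Obj) (g : Hom B Q), is_kernel g f.

Lemma mono_st_right_inverse (A S : Obj) (g : Hom A S) :
  is_mono g -> (forall (Q : Obj) (q : Hom S Q), q \oc g = 0 -> ideal q) ->
  exists h : Hom S A, st_eq T (g \oc h) (idm S).
Proof.
move=> gm qI; have [Q [q gq]] := cokerC g.
have [s [sI qs]] := in_ideal_epi_fix (cokernel_epi gq) (qI _ _ gq.1).
have /(mono_cokernel_factor monoK gm gq) [h gh] : q \oc (idm S - s) = 0.
  by rewrite compoBr compo1 qs subrr.
by exists h; rewrite /st_eq gh addrAC subrr add0r; apply: in_idealN.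
Qed.

Hypothesis injT : forall X : Obj, T X -> is_injective X.
Hypothesis kerC : forall (A B : Obj) (f : Hom A B),
  exists (K : Obj) (k : Hom K A), is_kernel f k.

Lemma kernel_factor_embedding (A B K X : Obj) (f : Hom A B) (k : Hom K A)
    (u : Hom K X) (v : Hom X A) :
  st_epi T f -> is_kernel f k -> k = v \oc u -> T X ->
  exists (S : Obj) (g : Hom A S) (p : Hom S B) (i : Hom B S),
    [/\ is_mono g, p \oc g = f, p \oc i = idm B &
        forall (Q : Obj) (q : Hom S Q), q \oc g = 0 -> ideal q].
Proof.
move=> fe fk kvu TX.
have um : is_mono u by apply: (@monoSr _ _ _ v); rewrite -kvu; apply: kernel_mono fk.
have [w wk] := injT TX (kernel_mono fk) u.
have [S [i1 [i2 [p1 [p2 bS]]]]] := biprodC B X.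
have [e1 e2 e3 e4 _] := bS.
pose g := i1 \oc f + i2 \oc w.
have p1g : p1 \oc g = f by rewrite compoDr !compoA e1 e3 comp1o comp0o addr0.
have p2g : p2 \oc g = w by rewrite compoDr !compoA e2 e4 comp1o comp0o add0r.
exists S, g, p1, i1; split => //.
  apply: mono_of_comp0 => Y a ga.
  have /fk.2 [e [ke _]] : f \oc a = 0 by rewrite -p1g -compoA ga compo0.
  have ue : u \oc e = u \oc 0 by rewrite compo0 -wk -compoA ke -p2g -compoA ga compo0.
  by rewrite -ke (um _ _ _ ue) compo0.
move=> Q q qg; rewrite (biproduct_decomp q bS).
apply: idealD; last exact: in_ideal_factor.
apply: in_ideal_compr; apply: (st_epi_ideal fe).
have -> : q \oc i1 \oc f = - (q \oc i2 \oc w).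
  by apply/eqP; rewrite -addr_eq0 -!compoA -compoDr qg.
by apply/in_idealN/in_ideal_factor.
Qed.

Lemma st_mono_epi_embedding (A B : Obj) (f : Hom A B) :
  st_mono T f -> st_epi T f ->
  exists (S : Obj) (g : Hom A S) (p : Hom S B) (i : Hom B S),
    [/\ is_mono g, p \oc g = f, p \oc i = idm B &
        forall (Q : Obj) (q : Hom S Q), q \oc g = 0 -> ideal q].
Proof.
move=> fm fe; have [K [k fk]] := kerC f.
have kI : ideal k by apply: (st_mono_ideal fm); rewrite fk.1; apply: ideal0.
case: (in_ideal_factors kI) => [k0|[X [u [v [TX kvu]]]]]; last first.
  exact: kernel_factor_embedding fe fk kvu TX.
exists B, f, (idm B), (idm B); split; rewrite ?comp1o //.
- apply: mono_of_comp0 => Y a fa.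
  by have [e [<- _]] := fk.2 Y a fa; rewrite k0 comp0o.
- by move=> Q q qf; apply: (st_epi_ideal fe); rewrite qf; apply: ideal0.
Qed.

End Abelian.
End Ideal.
End Preadditive.

Theorem corollary4p7 (C : precat) (T : Obj C -> Prop) :
  is_abelian C ->
  (forall X : Obj C, T X -> is_projective X /\ is_injective X) ->
  closed_under_direct_sums T ->
  closed_under_direct_summands T ->
  stable_balanced T.
Proof.
move=> [preC [_ [biprodC [kerC [cokerC [monoK _]]]]]] projinjT sumT _ A B f fm fe.
have projT X (TX : T X) := (projinjT X TX).1.
have injT X (TX : T X) := (projinjT X TX).2.
have [S [g [p [i [gm pg pi gI]]]]] :=
  st_mono_epi_embedding preC biprodC sumT injT kerC fm fe.
have [h gh] := mono_st_right_inverse preC biprodC sumT projT cokerC monoK gm gI.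
apply: (st_iso_of_right_inverse preC fm (r := h \oc i)).
rewrite /st_eq; have -> : f \oc (h \oc i) - idm B = p \oc (g \oc h - idm S) \oc i.
  by rewrite (compoBr preC) (compo1 preC) (compoBl preC) pi -pg !(compoA preC).
exact/(in_ideal_compr preC)/(in_ideal_compl preC).
Qed.
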